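(* Let $\vdash$ be a protoalgebraic logic and $\Phi$ a Sahlqvist quasiequation compatible with $\vdash$. The following are equivalent: (i) $\vdash$ validates all metarules in $\mathsf{R}_\vdash(\Phi)$; (ii) the semilattice $\mathsf{Th}^\omega(\vdash)$ validates $\Phi$; (iii) the semilattice $\mathsf{Fi}^\omega_\vdash(\boldsymbol{A})$ validates $\Phi$ for every algebra $\boldsymbol{A}$.
   Context: A logic $\vdash$ is a finitary, substitution-invariant consequence relation on the set $Fm(\vdash)$ of formulas (over countably many variables) of an algebraic language; all algebras are of the same type. A finite set $\Gamma$ is inconsistent if $\Gamma\vdash\varphi$ for all $\varphi$. $\vdash$ is protoalgebraic if there is a nonempty finite $\Delta(x,y)$ with $\emptyset\vdash\Delta(x,x)$ and $x,\Delta(x,y)\vdash y$. $\vdash$ has the inconsistency lemma (IL) if for each $n\ge1$ there is a finite set $\sim_n(x_1,\dots,x_n)$ with: $\Gamma\cup\{\varphi_1,\dots,\varphi_n\}$ inconsistent iff $\Gamma\vdash\sim_n(\varphi_1,\dots,\varphi_n)$ (finite $\Gamma$); the deduction theorem (DT) if for all $n,m\ge1$ there is a finite set $(x_1..x_n)\Rightarrow_{nm}(y_1..y_m)$ with $\Gamma,\varphi_1..\varphi_n\vdash\psi_1..\psi_m$ iff $\Gamma\vdash(\varphi_1..\varphi_n)\Rightarrow_{nm}(\psi_1..\psi_m)$; the proof by cases (PC) if for all $n,m$ there is a finite set $(x_1..x_n)\curlyvee_{nm}(y_1..y_m)$ with [$\Gamma,\varphi_1..\varphi_n\vdash\gamma$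 and $\Gamma,\psi_1..\psi_m\vdash\gamma$] iff $\Gamma,(\varphi_1..\varphi_n)\curlyvee_{nm}(\psi_1..\psi_m)\vdash\gamma$ (finite sets). Fix such witnessing sets when they exist, and fix a theorem $\top(x)$ of $\vdash$ (one exists when $\vdash$ is protoalgebraic). Formulas of $\mathsf{IPC}$ use $\land,\lor,\to,\lnot,0,1$. Such a formula is compatible with $\vdash$ if: $\vdash$ has IL whenever $0$ or $\lnot$ occurs, DT whenever $\to$ occurs, PC whenever $\lor$ occurs. For compatible $\varphi(x_1..x_n)$ and $k\ge1$ define a finite set $\boldsymbol{\varphi}^k(x_1^1..x_1^k,\dots,x_n^1..x_n^k)$ of formulas of $\vdash$ recursively: $\boldsymbol{x_m}^k=\{x_m^1..x_m^k\}$; $\boldsymbol{1}^k=\{\top(x_1^1)\}$; $\boldsymbol{0}^k=\{x_1^1\}\cup\sim_1(x_1^1)$; $(\boldsymbol{\psi\land\chi})^k=\boldsymbol{\psi}^k\cup\boldsymbol{\chi}^k$; if $\boldsymbol{\psi}^k=\{\psi_1..\psi_m\}$ and $\boldsymbol{\chi}^k=\{\chi_1..\chi_t\}$ then $(\boldsymbol{\lnot\psi})^k=\sim_m(\psi_1..\psi_m)$, $(\boldsymbol{\psi\to\chi})^k=(\psi_1..\psi_m)\Rightarrow_{mt}(\chi_1..\chi_t)$, $(\boldsymbol{\psi\lor\chi})^k=(\psi_1..\psi_m)\curlyvee_{mt}(\chi_1..\chi_t)$. Sahlqvist quasiequations: a variable occurrence is positive (negative) if the number of negations and antecedents of implications in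 whose scope it lies is even (odd); positive/negative formulas have all occurrences so. Sahlqvist antecedent: built from variables, negative formulas, $0,1$ using $\land,\lor$. Sahlqvist implication: positive formula, or $\lnot\varphi$ ($\varphi$ Sahlqvist antecedent), or $\varphi\to\psi$ ($\varphi$ Sahlqvist antecedent, $\psi$ positive). A Sahlqvist quasiequation is $\Phi=\varphi_1(x_1..x_n)\land y\le z\,\&\cdots\&\,\varphi_m(x_1..x_n)\land y\le z\Longrightarrow y\le z$ with $y,z$ distinct variables not in the $\varphi_i$, each $\varphi_i$ built from Sahlqvist implications by $\land,\lor$, and $a\le b$ meaning $a\land b\approx a$; it is compatible with $\vdash$ if all $\varphi_i$ are. $\mathsf{R}_\vdash(\Phi)$ is the set of metarules: from $\Gamma,\boldsymbol{\varphi_i}^k(\gamma_1^1..\gamma_1^k,\dots,\gamma_n^1..\gamma_n^k)\vdash\psi$ for all $i\le m$, infer $\Gamma\vdash\psi$, for every $k\ge1$ and finite $\Gamma\cup\{\psi\}\cup\{\gamma_i^j\}\subseteq Fm(\vdash)$. A deductive filter of $\vdash$ on $\boldsymbol{A}$ is $F\subseteq A$ such that whenever $\Gamma\vdash\varphi$ and $h\colon\boldsymbol{Fm}(\vdash)\to\boldsymbol{A}$ is a homomorphism with $h[\Gamma]\subseteq F$, then $h(\varphi)\in F$; $\mathrm{Fg}(X)$ is the least deductive filter containing $X$. $\mathsf{Fi}^\omega_\vdash(\boldsymbol{A})$ is the set of finitely generated deductive filters, a semilattice under $F+G=\mathrm{Fg}(F\cup G)$ whose order is $\supseteq$; $\mathsf{Th}^\omega(\vdash)=\mathsf{Fi}^\omega_\vdash(\boldsymbol{Fm}(\vdash))$.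 A formula compatible with protoalgebraic $\vdash$ is interpreted in $\mathsf{Fi}^\omega_\vdash(\boldsymbol{A})$ as follows: $\land$ as $+$; $1$ as $\mathrm{Fg}(\emptyset)$; with IL, $\lnot\mathrm{Fg}(a_1..a_n)=\mathrm{Fg}(\sim_n^{\boldsymbol{A}}(a_1..a_n))$ (a pseudocomplement) and $0=A$ (the minimum); with DT, $\mathrm{Fg}(a_1..a_n)\to\mathrm{Fg}(b_1..b_m)=\mathrm{Fg}((a_1..a_n)\Rightarrow^{\boldsymbol{A}}_{nm}(b_1..b_m))$ (relative pseudocomplement); with PC, $\lor$ as $\cap$ (making it a distributive lattice). Validity of $\Phi$ is with respect to this interpretation. *)

From mathcomp Require Import all_boot.
From Stdlib Require Import ClassicalEpsilon.

Set Implicit Arguments.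
Unset Strict Implicit.
Unset Printing Implicit Defensive.

Record lang := Lang { op : Type; arity : op -> nat }.

Inductive term (L : lang) : Type :=
| Var : nat -> term L
| App : forall f : op L, ('I_(arity f) -> term L) -> term L.
Arguments Var {L}.
Arguments App {L}.

Fixpoint subst (L : lang) (s : nat -> term L) (t : term L) : term L :=
  match t with
  | Var i => s i
  | App f a => App f (fun j => subst s (a j))
  end.

Fixpoint vars_lt (L : lang) (n : nat) (t : term L) : Prop :=
  match t with
  | Var i => (i < n)%N
  | App f a => forall j, vars_lt n (a j)
  end.

Definition inst (L : lang) (l : seq (term L)) (t : term L) : term L :=
  subst (fun i => nth (Var 0) l i) t.

Definition setl (T : Type) (l : seq T) : T -> Prop := fun x => List.In x l.
Definition union (T : Type) (X Y : T -> Prop) : T -> Prop := fun x => X x \/ Y x.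
Definition inter (T : Type) (X Y : T -> Prop) : T -> Prop := fun x => X x /\ Y x.
Definition emptyset (T : Type) : T -> Prop := fun _ => False.
Definition fullset (T : Type) : T -> Prop := fun _ => True.

Record logic (L : lang) := Logic {
  entails : (term L -> Prop) -> term L -> Prop;
  entails_refl : forall G phi, G phi -> entails G phi;
  entails_mono : forall (G D : term L -> Prop) phi,
      (forall t, G t -> D t) -> entails G phi -> entails D phi;
  entails_cut : forall (G D : term L -> Prop) phi,
      (forall d, D d -> entails G d) -> entails D phi -> entails G phi;
  entails_struct : forall (s : nat -> term L) G phi, entails G phi ->
      entails (fun t => exists u, G u /\ t = subst s u) (subst s phi);
  entails_finitary : forall G phi, entails G phi ->
      exists l : seq (term L), (forall t, List.In t l -> G t) /\ entails (setl l) phi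
}.

Definition entails_all (L : lang) (lg : logic L) (G : term L -> Prop) (l : seq (term L)) :=
  forall t, List.In t l -> entails lg G t.

Definition inconsistent (L : lang) (lg : logic L) (G : term L -> Prop) :=
  forall phi, entails lg G phi.

Definition protoalgebraic (L : lang) (lg : logic L) :=
  exists D : seq (term L),
    D <> [::] /\ (forall d, List.In d D -> vars_lt 2 d) /\
    entails_all lg (@emptyset _) (map (inst [:: Var 0; Var 0]) D) /\
    entails lg (union (setl [:: Var 0]) (setl D)) (Var 1).

Definition is_theorem (L : lang) (lg : logic L) (top : term L) :=
  vars_lt 1 top /\ entails lg (@emptyset _) top.

Definition IL_witness (L : lang) (lg : logic L) (neg : nat -> seq (term L)) :=
  forall n, (0 < n)%N ->
    neg n <> [::] /\ (forall t, List.In t (neg n) -> vars_lt n t) /\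
    forall G phis : seq (term L), size phis = n ->
      (inconsistent lg (union (setl G) (setl phis)) <->
       entails_all lg (setl G) (map (inst phis) (neg n))).

(* imp n m = (x_1..x_n) =>_{nm} (y_1..y_m), with x_i = Var (i-1), y_j = Var (n+j-1) *)
Definition DT_witness (L : lang) (lg : logic L) (imp : nat -> nat -> seq (term L)) :=
  forall n m, (0 < n)%N -> (0 < m)%N ->
    imp n m <> [::] /\ (forall t, List.In t (imp n m) -> vars_lt (n + m) t) /\
    forall G phis psis : seq (term L), size phis = n -> size psis = m ->
      (entails_all lg (union (setl G) (setl phis)) psis <->
       entails_all lg (setl G) (map (inst (phis ++ psis)) (imp n m))).

Definition PC_witness (L : lang) (lg : logic L) (disj : nat -> nat -> seq (term L)) :=
  forall n m, (0 < n)%N -> (0 < m)%N ->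
    disj n m <> [::] /\ (forall t, List.In t (disj n m) -> vars_lt (n + m) t) /\
    forall (G phis psis : seq (term L)) (g : term L), size phis = n -> size psis = m ->
      ((entails lg (union (setl G) (setl phis)) g /\
        entails lg (union (setl G) (setl psis)) g) <->
       entails lg (union (setl G) (setl (map (inst (phis ++ psis)) (disj n m)))) g).

Inductive ipc : Type :=
| IVar of nat
| IAnd of ipc & ipc
| IOr of ipc & ipc
| IImp of ipc & ipc
| INeg of ipc
| IBot
| ITop.

Fixpoint polar (b : bool) (phi : ipc) : Prop :=
  match phi with
  | IVar _ => b = true
  | IAnd a c => polar b a /\ polar b c
  | IOr a c => polar b a /\ polar b c
  | IImp a c => polar (~~ b) a /\ polar b c
  | INeg a => polar (~~ b) a
  | IBot => True
  | ITop => True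
  end.

Definition positive_formula (phi : ipc) := polar true phi.
Definition negative_formula (phi : ipc) := polar false phi.

Inductive sahlqvist_antecedent : ipc -> Prop :=
| SA_var i : sahlqvist_antecedent (IVar i)
| SA_negf phi : negative_formula phi -> sahlqvist_antecedent phi
| SA_bot : sahlqvist_antecedent IBot
| SA_top : sahlqvist_antecedent ITop
| SA_and a c : sahlqvist_antecedent a -> sahlqvist_antecedent c ->
               sahlqvist_antecedent (IAnd a c)
| SA_or a c : sahlqvist_antecedent a -> sahlqvist_antecedent c ->
              sahlqvist_antecedent (IOr a c).

Inductive sahlqvist_implication : ipc -> Prop :=
| SI_pos phi : positive_formula phi -> sahlqvist_implication phi
| SI_neg phi : sahlqvist_antecedent phi -> sahlqvist_implication (INeg phi)
| SI_imp phi psi : sahlqvist_antecedent phi -> positive_formula psi ->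
                   sahlqvist_implication (IImp phi psi).

Inductive sahlqvist_formula : ipc -> Prop :=
| SF_imp phi : sahlqvist_implication phi -> sahlqvist_formula phi
| SF_and a c : sahlqvist_formula a -> sahlqvist_formula c -> sahlqvist_formula (IAnd a c)
| SF_or a c : sahlqvist_formula a -> sahlqvist_formula c -> sahlqvist_formula (IOr a c).

Fixpoint occurs (i : nat) (phi : ipc) : Prop :=
  match phi with
  | IVar j => j = i
  | IAnd a c | IOr a c | IImp a c => occurs i a \/ occurs i c
  | INeg a => occurs i a
  | IBot | ITop => False
  end.

(* The Sahlqvist quasiequation
     phi_1 /\ y <= z & ... & phi_m /\ y <= z  ==>  y <= z
   is represented by the data (phis = [phi_1; ...; phi_m], y, z). *)
Definition sahlqvist_qe (phis : seq ipc) (y z : nat) :=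
  y <> z /\
  forall phi, List.In phi phis ->
    sahlqvist_formula phi /\ ~ occurs y phi /\ ~ occurs z phi.

Fixpoint uses_IL (phi : ipc) : Prop :=
  match phi with
  | IVar _ | ITop => False
  | IBot | INeg _ => True
  | IAnd a c | IOr a c | IImp a c => uses_IL a \/ uses_IL c
  end.

Fixpoint uses_DT (phi : ipc) : Prop :=
  match phi with
  | IVar _ | ITop | IBot => False
  | IImp _ _ => True
  | INeg a => uses_DT a
  | IAnd a c | IOr a c => uses_DT a \/ uses_DT c
  end.

Fixpoint uses_PC (phi : ipc) : Prop :=
  match phi with
  | IVar _ | ITop | IBot => False
  | IOr _ _ => True
  | INeg a => uses_PC a
  | IAnd a c | IImp a c => uses_PC a \/ uses_PC c
  end.

(* compatibility, relative to the fixed witnesses *)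
Definition compatible (L : lang) (lg : logic L) (neg : nat -> seq (term L))
    (imp disj : nat -> nat -> seq (term L)) (phi : ipc) :=
  (uses_IL phi -> IL_witness lg neg) /\
  (uses_DT phi -> DT_witness lg imp) /\
  (uses_PC phi -> PC_witness lg disj).

(* trans k gam phi = phi^k(gam_1^1..gam_1^k, ..., gam_n^1..gam_n^k), where the
   variable x_m^j (j = 1..k) of phi^k is substituted by gam m (j-1); the first
   variable x_1 of phi is IVar 0. *)
Fixpoint trans (L : lang) (top : term L) (neg : nat -> seq (term L))
    (imp disj : nat -> nat -> seq (term L)) (k : nat) (gam : nat -> nat -> term L)
    (phi : ipc) : seq (term L) :=
  match phi with
  | IVar m => mkseq (gam m) k
  | ITop => [:: inst [:: gam 0 0] top]
  | IBot => gam 0 0 :: map (inst [:: gam 0 0]) (neg 1)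
  | IAnd a c => trans top neg imp disj k gam a ++ trans top neg imp disj k gam c
  | INeg a => let l := trans top neg imp disj k gam a in map (inst l) (neg (size l))
  | IImp a c =>
      let l1 := trans top neg imp disj k gam a in
      let l2 := trans top neg imp disj k gam c in
      map (inst (l1 ++ l2)) (imp (size l1) (size l2))
  | IOr a c =>
      let l1 := trans top neg imp disj k gam a in
      let l2 := trans top neg imp disj k gam c in
      map (inst (l1 ++ l2)) (disj (size l1) (size l2))
  end.

Definition validates_metarules (L : lang) (lg : logic L) (top : term L)
    (neg : nat -> seq (term L)) (imp disj : nat -> nat -> seq (term L))
    (phis : seq ipc) :=
  forall k, (0 < k)%N ->
  forall (G : seq (term L)) (psi : term L) (gam : nat -> nat -> term L),
    (forall phi, List.In phi phis ->
       entails lg (union (setl G) (setl (trans top neg imp disj k gam phi))) psi) ->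
    entails lg (setl G) psi.

Record algebra (L : lang) := Alg {
  carrier :> Type;
  ops : forall f : op L, ('I_(arity f) -> carrier) -> carrier
}.

Fixpoint eval (L : lang) (A : algebra L) (v : nat -> A) (t : term L) : A :=
  match t with
  | Var i => v i
  | App f a => @ops L A f (fun j => eval v (a j))
  end.

Definition formula_alg (L : lang) : algebra L := @Alg L (term L) (@App L).

Definition deductive_filter (L : lang) (lg : logic L) (A : algebra L) (F : A -> Prop) :=
  forall G phi, entails lg G phi ->
  forall v : nat -> A, (forall t, G t -> F (eval v t)) -> F (eval v phi).

Definition Fg (L : lang) (lg : logic L) (A : algebra L) (X : A -> Prop) : A -> Prop :=
  fun a => forall F, deductive_filter lg F -> (forall x, X x -> F x) -> F a.

Definition fin_gen (L : lang) (lg : logic L) (A : algebra L) (G : A -> Prop) :=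
  exists l : seq A, G = Fg lg (setl l).

Definition gens (L : lang) (lg : logic L) (A : algebra L) (G : A -> Prop) : seq A :=
  epsilon (inhabits [::]) (fun l : seq A => l <> [::] /\ G = Fg lg (setl l)).

Definition Fg_witness (L : lang) (lg : logic L) (A : algebra L) (l : seq A)
    (W : seq (term L)) : A -> Prop :=
  match l with
  | [::] => Fg lg (@emptyset A)
  | a :: _ => Fg lg (setl (map (eval (fun i => nth a l i)) W))
  end.

Fixpoint interp (L : lang) (lg : logic L) (neg : nat -> seq (term L))
    (imp disj : nat -> nat -> seq (term L)) (A : algebra L) (g : nat -> A -> Prop)
    (phi : ipc) : A -> Prop :=
  match phi with
  | IVar i => g i
  | ITop => Fg lg (@emptyset A)
  | IBot => @fullset A
  | IAnd a c => Fg lg (union (interp lg neg imp disj g a) (interp lg neg imp disj g c))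
  | IOr a c => inter (interp lg neg imp disj g a) (interp lg neg imp disj g c)
  | INeg a =>
      let l := gens lg (interp lg neg imp disj g a) in
      Fg_witness lg l (neg (size l))
  | IImp a c =>
      let l1 := gens lg (interp lg neg imp disj g a) in
      let l2 := gens lg (interp lg neg imp disj g c) in
      Fg_witness lg (l1 ++ l2) (imp (size l1) (size l2))
  end.

(* Fi^omega(A) validates phi_1 /\ y <= z & ... ==> y <= z,
   where a <= b means a /\ b = a *)
Definition validates_qe (L : lang) (lg : logic L) (neg : nat -> seq (term L))
    (imp disj : nat -> nat -> seq (term L)) (A : algebra L)
    (phis : seq ipc) (y z : nat) :=
  forall g : nat -> A -> Prop, (forall i, fin_gen lg (g i)) ->
    (forall phi, List.In phi phis ->
       interp lg neg imp disj g (IAnd (IAnd phi (IVar y)) (IVar z)) =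
       interp lg neg imp disj g (IAnd phi (IVar y))) ->
    interp lg neg imp disj g (IAnd (IVar y) (IVar z)) = interp lg neg imp disj g (IVar y).

From mathcomp Require Import all_boot zify.
From Stdlib Require Import ClassicalEpsilon FunctionalExtensionality PropExtensionality.

Set Implicit Arguments.
Unset Strict Implicit.
Unset Printing Implicit Defensive.

(** For (ii) => (i), evaluate Phi in [Th^omega] at
    [y |-> Cn(Gamma)], [z |-> Cn(psi)] and [x_m |-> Cn(gamma_m^1, ..., gamma_m^k)]: then
    [phi_i] denotes [Cn(phi_i^k(gamma))], and the premises of Phi become those of the
    metarule.

    For (i) => (iii), note that in a protoalgebraic logic with witness [Delta(x, y)] filter
    generation on any algebra is witnessed by single rule instances: [c] lies in [Fg(X)] iff
    [c = v(phi)] for some [Gamma |- phi] with every [v(gamma)] in [X] or in [Fg(emptyset)].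
    Indeed [Delta(phi, gamma)] is theorem-valued whenever [v(phi) = v(gamma)], so a premise
    [gamma] of a rule may be replaced by the conclusion [phi] of another derivation with the
    same value.  Hence every Horn metarule of the logic, "from [Gamma, s[P_k] |- s(t_k)] for
    all [k] infer [Gamma, s[Q] |- s(c)]", holds for the filters of every algebra.  The
    inconsistency lemma, the deduction theorem, proof by cases and the metarules [R(Phi)] are
    all of this form.  The first three show that, in [Fi^omega(A)], [phi_i] denotes the filter
    generated by [h[phi_i^k(gamma)]] for a suitable valuation [h], and [R(Phi)] then yields Phi. *)

Lemma predext (T : Type) (P Q : T -> Prop) : (forall x, P x <-> Q x) -> P = Q.
Proof.
by move=> PQ; apply: functional_extensionality => x; apply: propositional_extensionality.
Qed.

Lemma In_nth (T : Type) (x0 x : T) (l : seq T) :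
  List.In x l -> exists2 i, (i < size l)%N & nth x0 l i = x.
Proof.
elim: l => [|a l IH] //= [->|/IH [i lt_i <-]]; first by exists 0.
by exists i.+1.
Qed.

Lemma nth_In (T : Type) (x0 : T) (l : seq T) i : (i < size l)%N -> List.In (nth x0 l i) l.
Proof. by elim: l i => [|a l IH] [|i] //= lt_i; [left | right; apply: IH]. Qed.

Lemma In_iota m n k : List.In k (iota m n) <-> (m <= k < m + n)%N.
Proof.
elim: n m => [|n IH] m /=; first by split=> //; lia.
rewrite IH; split=> [[<-|]|lt_k]; [lia | lia |].
by case: (eqVneq m k) => [|ne]; [left | right; lia].
Qed.

Lemma nth_cat_size (T : Type) (x0 : T) (l1 l2 : seq T) k :
  nth x0 (l1 ++ l2) (size l1 + k) = nth x0 l2 k.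
Proof. by rewrite nth_cat ltnNge leq_addr addKn. Qed.

Lemma In_nseq (T : Type) n (e x : T) : List.In x (nseq n e) -> x = e.
Proof. by elim: n => [|n IH] //= [<-|/IH]. Qed.

Lemma exists_common_seq (T : Type) (good : T -> Prop) (R : nat -> seq T -> Prop) n :
  (forall k l l', (forall x, List.In x l -> List.In x l') -> R k l -> R k l') ->
  (forall k, (k < n)%N -> exists2 l, (forall x, List.In x l -> good x) & R k l) ->
  exists2 l, (forall x, List.In x l -> good x) & forall k, (k < n)%N -> R k l.
Proof.
move=> R_mono; elim: n => [|n IH] Rn; first by exists [::].
have [k lt_k|l l_good Rl] := IH; first by apply: Rn; lia.
have [l' l'_good Rl'] := Rn n (leqnn _).
exists (l ++ l') => [x /List.in_app_iff [/l_good|/l'_good] //|k lt_k].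
have [lt_kn|ge_k] := ltnP k n.
  by apply: R_mono (Rl k lt_kn) => x x_l; apply: List.in_or_app; left.
have -> : k = n by lia.
by apply: R_mono Rl' => x x_l'; apply: List.in_or_app; right.
Qed.

Section Terms.
Context {L : lang}.
Implicit Types (t : term L) (s : nat -> term L).

Lemma subst_comp s1 s2 t : subst s2 (subst s1 t) = subst (fun i => subst s2 (s1 i)) t.
Proof.
by elim: t => [i|f a IH] //=; congr App; apply: functional_extensionality.
Qed.

Lemma eval_subst (A : algebra L) (v : nat -> A) s t :
  eval v (subst s t) = eval (fun i => eval v (s i)) t.
Proof.
by elim: t => [i|f a IH] //=; congr ops; apply: functional_extensionality.
Qed.

Lemma eval_eq_lt (A : algebra L) n (v v' : nat -> A) t :
  vars_lt n t -> (forall i, (i < n)%N -> v i = v' i) -> eval v t = eval v' t.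
Proof.
elim: t => [i|f a IH] /= t_n vv'; first exact: vv'.
by congr ops; apply: functional_extensionality => j; apply: IH.
Qed.

Lemma eval_ext (A : algebra L) (v v' : nat -> A) t :
  v =1 v' -> eval v t = eval v' t.
Proof.
move=> vv'; elim: t => [i|f a IH] //=.
by congr ops; apply: functional_extensionality.
Qed.

Lemma eval_formula_alg s t : @eval L (formula_alg L) s t = subst s t.
Proof.
by elim: t => [i|f a IH] //=; congr App; apply: functional_extensionality.
Qed.

Lemma subst_eq_lt n s s' t :
  vars_lt n t -> (forall i, (i < n)%N -> s i = s' i) -> subst s t = subst s' t.
Proof. by rewrite -!eval_formula_alg; apply: (@eval_eq_lt (formula_alg L)). Qed.

Lemma subst_Var t : subst (@Var L) t = t.
Proof.
by elim: t => [i|f a IH] //=; congr App; apply: functional_extensionality.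
Qed.

Lemma map_eval_Var (l : seq (term L)) : map (@eval L (formula_alg L) (@Var L)) l = l.
Proof. by elim: l => //= t l ->; rewrite eval_formula_alg subst_Var. Qed.

Definition rename (r : nat -> nat) t := subst (fun i => Var (r i)) t.

Lemma eval_rename (A : algebra L) (v : nat -> A) r t :
  eval v (rename r t) = eval (fun i => v (r i)) t.
Proof. exact: eval_subst. Qed.

Definition to_even := rename double.
Definition to_odd := rename (fun i => i.*2.+1).

Definition interleave (T : Type) (ve vo : nat -> T) i := if odd i then vo i./2 else ve i./2.

Lemma interleave_double (T : Type) (ve vo : nat -> T) i : interleave ve vo i.*2 = ve i.
Proof. by rewrite /interleave odd_double doubleK. Qed.

Lemma interleave_doubleS (T : Type) (ve vo : nat -> T) i : interleave ve vo i.*2.+1 = vo i.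
Proof. by rewrite /interleave /= odd_double /= uphalf_double. Qed.

Lemma eval_to_even (A : algebra L) (V h : nat -> A) t :
  (forall i, V i.*2 = h i) -> eval V (to_even t) = eval h t.
Proof. by move=> Vh; rewrite eval_rename; apply: eval_ext. Qed.

Lemma eval_interleave_even (A : algebra L) (ve vo : nat -> A) t :
  eval (interleave ve vo) (to_even t) = eval ve t.
Proof. by apply: eval_to_even => i; rewrite interleave_double. Qed.

Lemma eval_interleave_odd (A : algebra L) (ve vo : nat -> A) t :
  eval (interleave ve vo) (to_odd t) = eval vo t.
Proof. by rewrite eval_rename; apply: eval_ext => i; rewrite interleave_doubleS. Qed.

Definition var_seq m n : seq (term L) := map Var (iota m n).

Lemma size_var_seq m n : size (var_seq m n) = n.
Proof. by rewrite size_map size_iota. Qed.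

Lemma nth_var_seq m n i : (i < n)%N -> nth (Var 0) (var_seq m n) i = Var (m + i).
Proof. by move=> lt_i; rewrite (nth_map 0) ?size_iota // nth_iota. Qed.

Lemma In_var_seq m n t : List.In t (var_seq m n) <-> exists2 i, (m <= i < m + n)%N & t = Var i.
Proof.
rewrite List.in_map_iff; split=> [[i [<- /In_iota]]|[i /In_iota ? ->]]; first by exists i.
by exists i.
Qed.

Lemma map_nth_var_seq (A : algebra L) (a0 : A) (l : seq A) m n : (m + n <= size l)%N ->
  map (eval (nth a0 l)) (var_seq m n) = take n (drop m l).
Proof. by move=> mn_l; rewrite -map_comp map_nth_iota //; lia. Qed.

Lemma var_seq_cat m n k : var_seq m n ++ var_seq (m + n) k = var_seq m (n + k).
Proof. by rewrite /var_seq iotaD map_cat. Qed.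

Lemma inst_subst_lt (l : seq (term L)) s t :
  vars_lt (size l) t -> inst (map (subst s) l) t = subst s (inst l t).
Proof.
move=> t_l; rewrite /inst subst_comp; apply: (subst_eq_lt t_l) => i lt_i.
by rewrite (nth_map (Var 0)).
Qed.

Lemma inst_var_seq0 n t : vars_lt n t -> inst (var_seq 0 n) t = t.
Proof.
move=> t_n; rewrite /inst -[RHS]subst_Var; apply: (subst_eq_lt t_n) => i lt_i.
by rewrite nth_var_seq.
Qed.

Lemma inst_var_seq n s t :
  vars_lt n t -> inst (map (subst s) (var_seq 0 n)) t = subst s t.
Proof. by move=> t_n; rewrite inst_subst_lt ?inst_var_seq0 ?size_var_seq. Qed.

Lemma map_eval_nth_default (A : algebra L) (a b : A) (l : seq A) (W : seq (term L)) :
  (forall t, List.In t W -> vars_lt (size l) t) ->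
  map (eval (nth a l)) W = map (eval (nth b l)) W.
Proof.
elim: W => [|t W IH] //= W_l; rewrite IH => [|u Wu]; last by apply: W_l; right.
congr cons; apply: (eval_eq_lt (W_l t (or_introl erefl))) => i lt_i.
exact: set_nth_default.
Qed.

Lemma eval_inst (A : algebra L) (v : nat -> A) (l : seq (term L)) t :
  eval v (inst l t) = eval (fun i => eval v (nth (Var 0) l i)) t.
Proof. exact: eval_subst. Qed.

Lemma map_eval_inst (A : algebra L) (a0 : A) (v : nat -> A) (l W : seq (term L)) :
  (forall t, List.In t W -> vars_lt (size l) t) ->
  map (eval v) (map (inst l) W) = map (eval (nth a0 (map (eval v) l))) W.
Proof.
elim: W => [|t W IH] //= W_l; rewrite IH => [|u Wu]; last by apply: W_l; right.
congr cons; rewrite eval_inst; apply: (eval_eq_lt (W_l t (or_introl erefl))) => i lt_i.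
by rewrite (nth_map (Var 0)).
Qed.

End Terms.

Section Filters.
Context {L : lang} (lg : logic L) (A : algebra L).
Implicit Types (X Y : A -> Prop).

Lemma Fg_filter X : deductive_filter lg (Fg lg X).
Proof. by move=> G phi G_phi v GF F F_filter XF; apply: (F_filter G) => // t /GF; apply. Qed.

Lemma Fg_sub X x : X x -> Fg lg X x.
Proof. by move=> Xx F _; apply. Qed.

Lemma Fg_least X (F : A -> Prop) :
  deductive_filter lg F -> (forall x, X x -> F x) -> forall a, Fg lg X a -> F a.
Proof. by move=> F_filter XF a; apply. Qed.

Lemma Fg_minimal X Y : (forall x, X x -> Fg lg Y x) -> forall a, Fg lg X a -> Fg lg Y a.
Proof. by move=> XY a; apply: (Fg_least (@Fg_filter Y) XY). Qed.

Lemma Fg_mono X Y : (forall x, X x -> Y x) -> forall a, Fg lg X a -> Fg lg Y a.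
Proof. by move=> XY; apply: Fg_minimal => x /XY /Fg_sub. Qed.

Lemma Fg_entails X (G : term L -> Prop) phi (v : nat -> A) :
  entails lg G phi -> (forall t, G t -> Fg lg X (eval v t)) -> Fg lg X (eval v phi).
Proof. by move=> G_phi; apply: Fg_filter. Qed.

Lemma Fg_theorem X t (v : nat -> A) : entails lg (@emptyset _) t -> Fg lg X (eval v t).
Proof. by move=> t_thm; apply: Fg_entails t_thm _ => ? []. Qed.

Lemma Fg0_sub X a : Fg lg (@emptyset A) a -> Fg lg X a.
Proof. exact: Fg_mono. Qed.

Lemma Fg_id (F : A -> Prop) : deductive_filter lg F -> Fg lg F = F.
Proof. by move=> F_filter; apply: predext => a; split; [apply: Fg_least | apply: Fg_sub]. Qed.

Lemma Fg_union_absorbP X Y :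
  (forall y, Y y -> Fg lg X y) <-> Fg lg (union (Fg lg X) Y) = Fg lg X.
Proof.
split=> [YX|<- y Yy]; last by apply: Fg_sub; right.
apply: predext => a; split; last by apply: Fg_mono => x Xx; left; apply: Fg_sub.
by apply: Fg_minimal => x [|/YX].
Qed.

Lemma Fg_union_cat (l1 l2 : seq A) :
  Fg lg (union (Fg lg (setl l1)) (Fg lg (setl l2))) = Fg lg (setl (l1 ++ l2)).
Proof.
apply: predext => a; split.
- apply: Fg_minimal => x [] x_l; apply: (Fg_mono _ x_l) => w w_l;
    apply: List.in_or_app; by [left | right].
- by apply: Fg_mono => x /List.in_app_iff [] x_l; [left | right]; apply: Fg_sub.
Qed.

Lemma Fg_union_nil X : Fg lg (union X (setl [::])) = Fg lg X.
Proof. by apply: predext => a; split; apply: Fg_mono => x; [move=> [|[]] | left]. Qed.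

Lemma union0 (Y : A -> Prop) : union (@emptyset A) Y = Y.
Proof. by apply: predext => a; split => [[[]|]|]; [| right]. Qed.

Lemma Fg_union_congr X (Y Y' : A -> Prop) :
  Fg lg Y = Fg lg Y' -> Fg lg (union X Y) = Fg lg (union X Y').
Proof.
move=> YY'; apply: predext => a; split; apply: Fg_minimal => x [Xx|Yx];
  try by apply: Fg_sub; left.
- by apply: Fg_mono (_ : Fg lg Y' x) => [y|]; [right | rewrite -YY'; apply: Fg_sub].
- by apply: Fg_mono (_ : Fg lg Y x) => [y|]; [right | rewrite YY'; apply: Fg_sub].
Qed.

Lemma Fg_eq_of_char (W W' : seq A) (R : (A -> Prop) -> Prop) :
  (forall X, R X <-> forall w, List.In w W -> Fg lg X w) ->
  (forall X, R X <-> forall w, List.In w W' -> Fg lg X w) ->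
  Fg lg (setl W) = Fg lg (setl W').
Proof.
have sub (V V' : seq A) : (forall X, R X <-> forall w, List.In w V -> Fg lg X w) ->
    (forall X, R X <-> forall w, List.In w V' -> Fg lg X w) ->
    forall a, Fg lg (setl V) a -> Fg lg (setl V') a.
  by move=> RV RV'; apply: Fg_minimal; apply/RV/RV' => w; apply: Fg_sub.
by move=> RW RW'; apply: predext => a; split; apply: sub.
Qed.

Lemma Fg_setl_subP (W : seq A) (Y : A -> Prop) :
  (forall b, Fg lg (setl W) b -> Fg lg Y b) <-> (forall b, List.In b W -> Fg lg Y b).
Proof.
split=> WY b; last exact: Fg_minimal.
by move=> b_W; apply: WY; apply: Fg_sub.
Qed.

Lemma Fg_cat_theorems (l : seq A) n e : Fg lg (@emptyset A) e ->
  Fg lg (setl (l ++ nseq n e)) = Fg lg (setl l).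
Proof.
move=> e_thm; apply: predext => a.
split; last by apply: Fg_mono => x x_l; apply: List.in_or_app; left.
apply: Fg_minimal => x /List.in_app_iff [x_l|x_e]; first exact: Fg_sub.
by rewrite (In_nseq x_e); apply: Fg0_sub.
Qed.

Lemma Fg_witness_nth (a0 : A) (l : seq A) (W : seq (term L)) : (0 < size l)%N ->
  (forall d, List.In d W -> vars_lt (size l) d) ->
  Fg_witness lg l W = Fg lg (setl (map (eval (nth a0 l)) W)).
Proof. by case: l => [|a l] //= _ W_l; rewrite (map_eval_nth_default a a0). Qed.

Lemma gens_Fg (l : seq A) : (0 < size l)%N ->
  (0 < size (gens lg (Fg lg (setl l))))%N /\
  Fg lg (setl (gens lg (Fg lg (setl l)))) = Fg lg (setl l).
Proof.
move=> l_gt0; rewrite /gens; have [|gens_nil <-] := epsilon_spec (inhabits [::])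
  (fun l' : seq A => l' <> [::] /\ Fg lg (setl l) = Fg lg (setl l')).
  by exists l; split => //; case: l l_gt0.
by split=> //; case: (epsilon _ _) gens_nil.
Qed.

End Filters.

Lemma Fg_formula_alg {L : lang} (lg : logic L) (G : term L -> Prop) psi :
  Fg lg (A := formula_alg L) G psi <-> entails lg G psi.
Proof.
split; last first.
  move=> G_psi F F_filter GF; rewrite -[psi]subst_Var -eval_formula_alg.
  by apply: F_filter G_psi _ _ => t /GF; rewrite eval_formula_alg subst_Var.
apply: Fg_least => [D phi D_phi s Ds|x]; last exact: entails_refl.
rewrite /= eval_formula_alg; apply: entails_cut (entails_struct s D_phi) => _ [t [Dt ->]].
by rewrite -eval_formula_alg; apply: Ds.
Qed.

Lemma entails_subst {L : lang} (lg : logic L) (s : nat -> term L) (G : seq (term L)) phi :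
  entails lg (setl G) phi -> entails lg (setl (map (subst s) G)) (subst s phi).
Proof.
move/(entails_struct s); apply: entails_mono => _ [u [Gu ->]].
exact: List.in_map.
Qed.

(** * The translation [phi^k] *)

Fixpoint var_bound (phi : ipc) : nat :=
  match phi with
  | IVar m => m.+1
  | IAnd a c | IOr a c | IImp a c => maxn (var_bound a) (var_bound c)
  | INeg a => var_bound a
  | IBot | ITop => 0
  end.

Lemma occurs_var_bound m phi : occurs m phi -> (m < var_bound phi)%N.
Proof.
by elim: phi => //= [j ->|a IHa c IHc [/IHa|/IHc]|a IHa c IHc [/IHa|/IHc]|a IHa c IHc [/IHa|/IHc]];
  lia.
Qed.

Lemma var_bound_In (phis : seq ipc) phi :
  List.In phi phis -> (var_bound phi <= \max_(p <- phis) var_bound p)%N.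
Proof. by elim: phis => [|p phis IH] //= [->|/IH]; rewrite big_cons; lia. Qed.

Section Translation.
Context {L : lang} (lg : logic L) (top : term L) (neg : nat -> seq (term L))
  (imp disj : nat -> nat -> seq (term L)).
Notation compat := (compatible lg neg imp disj).
Notation tr := (trans top neg imp disj).

Lemma compatible_and a c : compat (IAnd a c) -> compat a /\ compat c.
Proof. by rewrite /compatible /=; tauto. Qed.

Lemma compatible_or a c : compat (IOr a c) -> [/\ compat a, compat c & PC_witness lg disj].
Proof. by rewrite /compatible /= => ?; split; tauto. Qed.

Lemma compatible_imp a c : compat (IImp a c) -> [/\ compat a, compat c & DT_witness lg imp].
Proof. by rewrite /compatible /= => ?; split; tauto. Qed.

Lemma compatible_neg a : compat (INeg a) -> compat a /\ IL_witness lg neg.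
Proof. by rewrite /compatible /=; tauto. Qed.

Lemma compatible_bot : compat IBot -> IL_witness lg neg.
Proof. by rewrite /compatible /=; tauto. Qed.

Lemma trans_size k gam phi : (0 < k)%N -> compat phi -> (0 < size (tr k gam phi))%N.
Proof.
move=> k_gt0; elim: phi => [m|a IHa c IHc|a IHa c IHc|a IHa c IHc|a IHa| |] /=.
- by rewrite size_mkseq.
- by case/compatible_and => /IHa ? _; rewrite size_cat; lia.
- case/compatible_or => /IHa a_gt0 /IHc c_gt0 /(_ _ _ a_gt0 c_gt0) [disj_nil _].
  by rewrite size_map; case: (disj _ _) disj_nil.
- case/compatible_imp => /IHa a_gt0 /IHc c_gt0 /(_ _ _ a_gt0 c_gt0) [imp_nil _].
  by rewrite size_map; case: (imp _ _) imp_nil.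
- case/compatible_neg => /IHa a_gt0 /(_ _ a_gt0) [neg_nil _].
  by rewrite size_map; case: (neg _) neg_nil.
- by [].
- by [].
Qed.

Lemma trans_subst k gam (s : nat -> term L) phi : vars_lt 1 top -> (0 < k)%N -> compat phi ->
  tr k (fun m j => subst s (gam m j)) phi = map (subst s) (tr k gam phi).
Proof.
move=> top_vars k_gt0; elim: phi => [m|a IHa c IHc|a IHa c IHc|a IHa c IHc|a IHa| |] /=.
- by rewrite /mkseq -map_comp.
- by case/compatible_and => /IHa -> /IHc ->; rewrite map_cat.
- case/compatible_or => ca cc PC; rewrite IHa // IHc // !size_map -map_cat -map_comp.
  have [_ [disj_vars _]] := PC _ _ (trans_size gam k_gt0 ca) (trans_size gam k_gt0 cc).
  apply: List.map_ext_in => d /disj_vars d_vars /=.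
  by apply: inst_subst_lt; rewrite size_cat.
- case/compatible_imp => ca cc DT; rewrite IHa // IHc // !size_map -map_cat -map_comp.
  have [_ [imp_vars _]] := DT _ _ (trans_size gam k_gt0 ca) (trans_size gam k_gt0 cc).
  apply: List.map_ext_in => d /imp_vars d_vars /=.
  by apply: inst_subst_lt; rewrite size_cat.
- case/compatible_neg => ca IL; rewrite IHa // !size_map -map_comp.
  have [_ [neg_vars _]] := IL _ (trans_size gam k_gt0 ca).
  by apply: List.map_ext_in => d /neg_vars d_vars /=; apply: inst_subst_lt.
- move/compatible_bot => IL; have [_ [neg_vars _]] := IL 1 erefl.
  congr cons; rewrite -map_comp; apply: List.map_ext_in => d /neg_vars d_vars /=.
  exact: (inst_subst_lt (l := [:: gam 0 0])).
- by move=> _; congr cons; apply: (inst_subst_lt (l := [:: gam 0 0])).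
Qed.

End Translation.

(** * Filter generation in protoalgebraic logics *)

Section Protoalgebraic.
Context {L : lang} (lg : logic L) (delta : seq (term L))
  (delta_vars : forall d, List.In d delta -> vars_lt 2 d)
  (delta_refl : entails_all lg (@emptyset _) (map (inst [:: Var 0; Var 0]) delta))
  (delta_mp : entails lg (union (setl [:: Var 0]) (setl delta)) (Var 1)).

Lemma entails_delta_mp (G : term L -> Prop) a b :
  entails lg G a -> (forall d, List.In d delta -> entails lg G (inst [:: a; b] d)) ->
  entails lg G b.
Proof.
move=> G_a G_delta; apply: entails_cut (entails_struct (fun i => nth (Var 0) [:: a; b] i) delta_mp).
by move=> _ [u [[[<-|[]]|d_delta] ->]] //; apply: G_delta.
Qed.

Lemma Fg_delta (A : algebra L) (X : A -> Prop) (v : nat -> A) a b d :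
  List.In d delta -> eval v a = eval v b -> Fg lg X (eval v (inst [:: a; b] d)).
Proof.
move=> d_delta ab.
have -> : eval v (inst [:: a; b] d) = eval (fun _ => eval v a) (inst [:: Var 0; Var 0] d).
  rewrite !eval_inst; apply: (eval_eq_lt (delta_vars d_delta)).
  by case=> [|[|i]] //=; rewrite ab.
by apply: Fg_theorem; apply: delta_refl; apply: List.in_map.
Qed.

Section Derivations.
Variable A : algebra L.
Implicit Types (X : A -> Prop) (v h : nat -> A).

Definition premises X v (G : seq (term L)) :=
  forall g, List.In g G -> X (eval v g) \/ Fg lg (@emptyset A) (eval v g).

Definition derivable X c :=
  exists G phi v, [/\ entails lg (setl G) phi, premises X v G & eval v phi = c].

Lemma premises_even X ve vo G :
  premises X ve G -> premises X (interleave ve vo) (map to_even G).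
Proof. by move=> XG _ /List.in_map_iff [g [<- /XG]]; rewrite eval_interleave_even. Qed.

Lemma premises_odd X ve vo G :
  premises X vo G -> premises X (interleave ve vo) (map to_odd G).
Proof. by move=> XG _ /List.in_map_iff [g [<- /XG]]; rewrite eval_interleave_odd. Qed.

Lemma merge_derivations (a0 : A) n (X : nat -> A -> Prop) (c : nat -> A) :
  (forall k, (k < n)%N -> derivable (X k) (c k)) ->
  exists v (D : nat -> seq (term L) * term L), forall k, (k < n)%N ->
    [/\ entails lg (setl (D k).1) (D k).2, premises (X k) v (D k).1 & eval v (D k).2 = c k].
Proof.
elim: n => [|n IH] Xc; first by exists (fun=> a0), (fun=> ([::], Var 0)).
have [k lt_k|v [D HD]] := IH; first by apply: Xc; lia.
have [G [phi [v' [G_phi XG phi_c]]]] := Xc n (leqnn _).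
exists (interleave v v'), (fun k => if (k < n)%N then (map to_even (D k).1, to_even (D k).2)
                                  else (map to_odd G, to_odd phi)).
move=> k lt_k; case: ifP => [/HD [Dk XDk <-]|ge_k] /=.
  by split; [apply: entails_subst | apply: premises_even | rewrite eval_interleave_even].
have -> : k = n by lia.
by split; [apply: entails_subst | apply: premises_odd | rewrite eval_interleave_odd].
Qed.

Lemma derivable_filter X : deductive_filter lg (derivable X).
Proof.
move=> G0 psi /entails_finitary [G [G_G0 G_psi]] w G_der.
have [k lt_k|v [D HD]] := @merge_derivations (w 0) (size G) (fun=> X)
    (fun k => eval w (nth (Var 0) G k)).
  by apply/G_der/G_G0/nth_In.
pose link k := map (inst [:: to_odd (D k).2; to_even (nth (Var 0) G k)]) delta.
pose Gam := List.flat_map (fun k => map to_odd (D k).1 ++ link k) (iota 0 (size G)).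
have Gam_k k : (k < size G)%N -> forall t, List.In t (map to_odd (D k).1 ++ link k) -> setl Gam t.
  by move=> lt_k t t_k; apply/List.in_flat_map; exists k; split => //; apply/In_iota; lia.
exists Gam, (to_even psi), (interleave w v); split; last exact: eval_interleave_even.
- apply: entails_cut (entails_subst _ G_psi) => _ /List.in_map_iff [u [<- /(In_nth (Var 0))]].
  move=> [k lt_k <-]; have [Dk _ _] := HD k lt_k.
  apply: (entails_delta_mp (a := to_odd (D k).2)) => [|d d_delta].
    apply: entails_mono (entails_subst _ Dk) => t t_D.
    by apply: (Gam_k k lt_k); apply: List.in_or_app; left.
  by apply/entails_refl/(Gam_k k lt_k)/List.in_or_app; right; apply: List.in_map.
- move=> g /List.in_flat_map [k [/In_iota lt_k]].
  have /HD [_ XD D_w] : (k < size G)%N by lia.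
  move=> /List.in_app_iff [g_D|g_link]; first exact: (premises_odd w XD).
  move: g_link => /List.in_map_iff [d [<- d_delta]]; right; apply: Fg_delta => //.
  by rewrite eval_interleave_odd eval_interleave_even D_w.
Qed.

Lemma Fg_derivable X c : Fg lg X c -> derivable X c.
Proof.
apply: (Fg_least (@derivable_filter X)) => x Xx.
exists [:: Var 0], (Var 0), (fun=> x); split => //; first by apply: entails_refl; left.
by move=> g [<-|[]]; left.
Qed.

Lemma derivation_rebase X h v (P G : seq (term L)) :
  premises (union X (setl (map (eval h) P))) v G ->
  exists2 Pi, (forall p, List.In p Pi -> Fg lg X (eval (interleave h v) p)) &
    forall g, List.In g G -> entails lg (union (setl Pi) (setl (map to_even P))) (to_odd g).
Proof.
elim: G => [|g G IH] XG; first by exists [::].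
have [g' g'_G|Pi Pi_X Pi_G] := IH; first by apply: XG; right.
have Pi_mono Pi' t : entails lg (union (setl Pi) (setl (map to_even P))) t ->
    entails lg (union (setl (Pi' ++ Pi)) (setl (map to_even P))) t.
  by apply: entails_mono => u [u_Pi|u_P]; [left; apply: List.in_or_app; right | right].
have [[Xg|/List.in_map_iff [p [pg p_P]]]|thm_g] := XG g (or_introl erefl).
- exists (to_odd g :: Pi) => [q [<-|/Pi_X //]|g' [<-|/Pi_G/(Pi_mono [:: to_odd g]) //]].
    by rewrite eval_interleave_odd; apply: Fg_sub.
  by apply: entails_refl; left; left.
- exists (map (inst [:: to_even p; to_odd g]) delta ++ Pi).
    move=> q /List.in_app_iff [/List.in_map_iff [d [<- d_delta]]|/Pi_X //].
    by apply: Fg_delta; rewrite // eval_interleave_even eval_interleave_odd.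
  move=> g' [<-|/Pi_G/(Pi_mono (map (inst [:: to_even p; to_odd g]) delta)) //].
  apply: (entails_delta_mp (a := to_even p)) => [|d d_delta].
    by apply: entails_refl; right; apply: List.in_map.
  by apply: entails_refl; left; apply: List.in_or_app; left; apply: List.in_map.
- exists (to_odd g :: Pi) => [q [<-|/Pi_X //]|g' [<-|/Pi_G/(Pi_mono [:: to_odd g]) //]].
    by rewrite eval_interleave_odd; apply: Fg0_sub.
  by apply: entails_refl; left; left.
Qed.

Lemma entails_of_Fg X h n (P : nat -> seq (term L)) (t : nat -> term L) :
  (forall k, (k < n)%N -> Fg lg (union X (setl (map (eval h) (P k)))) (eval h (t k))) ->
  exists V, (forall i, V i.*2 = h i) /\
    exists2 Pi, (forall p, List.In p Pi -> Fg lg X (eval V p)) &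
      forall k, (k < n)%N ->
        entails lg (union (setl Pi) (setl (map to_even (P k)))) (to_even (t k)).
Proof.
move=> XPt; have [k lt_k|v [D HD]] := @merge_derivations (h 0) n
    (fun k => union X (setl (map (eval h) (P k)))) (fun k => eval h (t k)).
  by apply: Fg_derivable; apply: XPt.
exists (interleave h v); split=> [i|]; first exact: interleave_double.
apply: exists_common_seq => [k Pi Pi' Pi_Pi'|k lt_k].
  by apply: entails_mono => u [/Pi_Pi' u_Pi|u_P]; [left | right].
have [Dk XDk Dk_t] := HD k lt_k.
have [Pi Pi_X Pi_D] := derivation_rebase XDk.
exists (Pi ++ map (inst [:: to_odd (D k).2; to_even (t k)]) delta).
  move=> p /List.in_app_iff [/Pi_X //|/List.in_map_iff [d [<- d_delta]]].
  by apply: Fg_delta; rewrite // eval_interleave_odd eval_interleave_even.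
have Pi_mono u : entails lg (union (setl Pi) (setl (map to_even (P k)))) u ->
    entails lg (union (setl (Pi ++ map (inst [:: to_odd (D k).2; to_even (t k)]) delta))
                      (setl (map to_even (P k)))) u.
  by apply: entails_mono => w [w_Pi|w_P]; [left; apply: List.in_or_app; left | right].
apply: (entails_delta_mp (a := to_odd (D k).2)) => [|d d_delta].
  apply: entails_cut (entails_subst _ Dk) => _ /List.in_map_iff [g [<- g_D]].
  exact/Pi_mono/Pi_D.
by apply: entails_refl; left; apply: List.in_or_app; right; apply: List.in_map.
Qed.

Lemma Fg_metarule n (P : nat -> seq (term L)) (t : nat -> term L) (Q : seq (term L)) c :
  (forall (G : seq (term L)) (s : nat -> term L),
     (forall k, (k < n)%N ->
        entails lg (union (setl G) (setl (map (subst s) (P k)))) (subst s (t k))) ->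
     entails lg (union (setl G) (setl (map (subst s) Q))) (subst s c)) ->
  forall X h, (forall k, (k < n)%N -> Fg lg (union X (setl (map (eval h) (P k)))) (eval h (t k))) ->
  Fg lg (union X (setl (map (eval h) Q))) (eval h c).
Proof.
move=> rule X h /entails_of_Fg [V [Vh [Pi Pi_X Pi_P]]].
rewrite -(eval_to_even _ Vh); apply: Fg_entails (rule Pi (fun i => Var i.*2) Pi_P) _.
move=> u [/Pi_X|/List.in_map_iff [q [<- q_Q]]]; first by apply: Fg_mono => x Xx; left.
by apply: Fg_sub; right; rewrite (eval_to_even _ Vh); apply: List.in_map.
Qed.

End Derivations.

(** * Inconsistency lemma, deduction theorem and proof by cases on filters *)

Section Witnesses.
Variable A : algebra L.
Implicit Types (X : A -> Prop) (l : seq A).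

Section Inconsistency.
Variable neg : nat -> seq (term L).
Hypothesis neg_IL : IL_witness lg neg.

Lemma IL_self_inconsistent (phis : seq (term L)) : (0 < size phis)%N ->
  inconsistent lg (union (setl (map (inst phis) (neg (size phis)))) (setl phis)).
Proof.
by move=> phis_gt0; have [_ [_ negP]] := neg_IL phis_gt0; apply/negP => // t; apply: entails_refl.
Qed.

(* [Gamma, phi |- ~phi] makes [Gamma, phi] inconsistent, by the inconsistency lemma
   instantiated at [Gamma := ~phi]. *)
Lemma neg_metarule n (G : seq (term L)) (s : nat -> term L) d : (0 < n)%N ->
  List.In d (neg n) ->
  (forall k, (k < size (neg n))%N -> entails lg
     (union (setl G) (setl (map (subst s) (var_seq 0 n)))) (subst s (nth (Var 0) (neg n) k))) ->
  entails lg (union (setl G) (setl (map (subst s) [::]))) (subst s d).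
Proof.
move=> n_gt0 d_neg G_neg; have [_ [neg_vars negP]] := neg_IL n_gt0.
pose phis := map (subst s) (var_seq 0 n).
have phis_n : size phis = n by rewrite size_map size_var_seq.
have inc : inconsistent lg (union (setl G) (setl phis)).
  have phis_gt0 : (0 < size phis)%N by rewrite phis_n.
  move=> psi; apply: entails_cut (IL_self_inconsistent phis_gt0 psi) => u [|u_phis].
    rewrite phis_n => /List.in_map_iff [e [<- e_neg]].
    rewrite inst_var_seq; last exact: neg_vars.
    by have [k lt_k <-] := In_nth (Var 0) e_neg; apply: G_neg.
  by apply: entails_refl; right.
apply: entails_mono (_ : entails lg (setl G) (subst s d)) => [t|]; first by left.
rewrite -(inst_var_seq (n := n)); last exact: neg_vars.
by apply: (proj1 (negP G phis phis_n) inc); apply: List.in_map.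
Qed.

Lemma Fg_neg_full (a0 : A) l e : (0 < size l)%N ->
  Fg lg (union (setl (map (eval (nth a0 l)) (neg (size l)))) (setl l)) e.
Proof.
move=> l_gt0; set n := size l; pose vs := @var_seq L 0 n.
have vs_l : map (eval (nth e l)) vs = l by rewrite map_nth_var_seq // drop0 take_size.
have vs_n : size vs = n by rewrite size_var_seq.
have := IL_self_inconsistent (phis := vs) _ (Var n); rewrite vs_n => /(_ l_gt0) vs_inc.
rewrite -[e](nth_default e (leqnn n)).
apply: (Fg_entails (v := nth e l) vs_inc) => t [t_neg|t_vs]; apply: Fg_sub; [left | right].
  rewrite -[in nth a0 l]vs_l -map_eval_inst; first exact: List.in_map.
  by rewrite vs_n; have [_ []] := neg_IL l_gt0.
by rewrite -{1}vs_l; apply: List.in_map.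
Qed.

Lemma Fg_negP (a0 : A) X l : (0 < size l)%N ->
  (forall e, Fg lg (union X (setl l)) e) <->
  (forall w, List.In w (map (eval (nth a0 l)) (neg (size l))) -> Fg lg X w).
Proof.
move=> l_gt0; split=> [full _ /List.in_map_iff [d [<- d_neg]]|negX e].
  rewrite -Fg_union_nil; apply: (Fg_metarule (n := size (neg (size l))) (Q := [::])
    (P := fun=> var_seq 0 (size l)) (t := fun k => nth (Var 0) (neg (size l)) k)) => [G s|k _].
    exact: neg_metarule.
  by rewrite map_nth_var_seq // drop0 take_size; apply: full.
move: (Fg_neg_full (a0 := a0) e l_gt0); apply: Fg_minimal => x [/negX|x_l].
  by apply: Fg_mono => y Xy; left.
by apply: Fg_sub; right.
Qed.

Lemma Fg_neg_congr (a1 a2 : A) l1 l2 : (0 < size l1)%N -> (0 < size l2)%N ->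
  Fg lg (setl l1) = Fg lg (setl l2) ->
  Fg lg (setl (map (eval (nth a1 l1)) (neg (size l1)))) =
  Fg lg (setl (map (eval (nth a2 l2)) (neg (size l2)))).
Proof.
move=> l1_gt0 l2_gt0 l12.
apply: (Fg_eq_of_char (R := fun X => forall e, Fg lg (union X (setl l1)) e)) => X.
  exact: Fg_negP.
by rewrite (Fg_union_congr X l12); apply: Fg_negP.
Qed.

End Inconsistency.

Section Deduction.
Variable imp : nat -> nat -> seq (term L).
Hypothesis imp_DT : DT_witness lg imp.

Lemma imp_metarule n m (G : seq (term L)) (s : nat -> term L) d :
  (0 < n)%N -> (0 < m)%N -> List.In d (imp n m) ->
  (forall k, (k < m)%N -> entails lg
     (union (setl G) (setl (map (subst s) (var_seq 0 n)))) (subst s (Var (n + k)))) ->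
  entails lg (union (setl G) (setl (map (subst s) [::]))) (subst s d).
Proof.
move=> n_gt0 m_gt0 d_imp G_y; have [_ [imp_vars impP]] := imp_DT n_gt0 m_gt0.
pose phis := map (subst s) (var_seq 0 n); pose psis := map (subst s) (var_seq n m).
have [phis_n psis_m] : size phis = n /\ size psis = m by rewrite /phis /psis !size_map !size_iota.
have /(impP G _ _ phis_n psis_m) G_imp : entails_all lg (union (setl G) (setl phis)) psis.
  move=> _ /List.in_map_iff [_ [<- /In_var_seq [i lt_i ->]]].
  by rewrite -(subnKC (_ : n <= i)%N); [apply: G_y | ]; lia.
apply: entails_mono (_ : entails lg (setl G) (subst s d)) => [t|]; first by left.
have phis_psis : phis ++ psis = map (subst s) (var_seq 0 (n + m)).
  by rewrite -map_cat -var_seq_cat.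
rewrite -(inst_var_seq (n := n + m)); last exact: imp_vars.
by rewrite -phis_psis; apply: G_imp; apply: List.in_map.
Qed.

Lemma Fg_impP (a0 : A) X l1 l2 : (0 < size l1)%N -> (0 < size l2)%N ->
  (forall b, List.In b l2 -> Fg lg (union X (setl l1)) b) <->
  (forall w, List.In w (map (eval (nth a0 (l1 ++ l2))) (imp (size l1) (size l2))) -> Fg lg X w).
Proof.
move=> l1_gt0 l2_gt0; set n := size l1; set m := size l2; set h := nth a0 (l1 ++ l2).
have [_ [imp_vars impP]] := imp_DT l1_gt0 l2_gt0.
have h_l1 : map (eval h) (var_seq 0 n) = l1.
  by rewrite map_nth_var_seq ?size_cat ?drop0 ?take_size_cat //; lia.
split=> [l2X _ /List.in_map_iff [d [<- d_imp]]|impX b /(In_nth a0) [j lt_j <-]].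
  rewrite -Fg_union_nil; apply: (Fg_metarule (n := m) (Q := [::]) (P := fun=> var_seq 0 n)
    (t := fun k => Var (n + k))) => [G s|k lt_k]; first exact: imp_metarule.
  by rewrite h_l1 /= /h nth_cat_size; apply: l2X; apply: nth_In.
pose x := @var_seq L 0 n; pose y := @var_seq L n m.
have [x_n y_m] : size x = n /\ size y = m by rewrite !size_map !size_iota.
have xy_imp : entails_all lg (union (setl (map (inst (x ++ y)) (imp n m))) (setl x)) y.
  by apply/(impP _ _ _ x_n y_m) => t t_imp; apply: entails_refl.
have /xy_imp y_j : List.In (Var (n + j)) y by apply/In_var_seq; exists (n + j) => //; lia.
rewrite -(nth_cat_size a0 l1) -/h; apply: (Fg_entails (v := h) y_j) => t [|t_x].
  move=> /List.in_map_iff [d [<- d_imp]]; rewrite (var_seq_cat 0 n m) inst_var_seq0; last first.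
    exact: imp_vars.
  by apply: Fg_mono (impX _ (List.in_map _ _ _ d_imp)) => a Xa; left.
by apply: Fg_sub; right; rewrite -{1}h_l1; apply: List.in_map.
Qed.

Lemma Fg_imp_congr (a1 a2 : A) l1 l2 l1' l2' :
  (0 < size l1)%N -> (0 < size l2)%N -> (0 < size l1')%N -> (0 < size l2')%N ->
  Fg lg (setl l1) = Fg lg (setl l1') -> Fg lg (setl l2) = Fg lg (setl l2') ->
  Fg lg (setl (map (eval (nth a1 (l1 ++ l2))) (imp (size l1) (size l2)))) =
  Fg lg (setl (map (eval (nth a2 (l1' ++ l2'))) (imp (size l1') (size l2')))).
Proof.
move=> l1_gt0 l2_gt0 l1'_gt0 l2'_gt0 l11' l22'.
apply: (Fg_eq_of_char (R := fun X => forall b, Fg lg (setl l2) b -> Fg lg (union X (setl l1)) b))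
  => X; last rewrite l22' (Fg_union_congr X l11');
  by apply: iff_trans (Fg_setl_subP lg _ _) _; apply: Fg_impP.
Qed.

End Deduction.

Section Cases.
Variable disj : nat -> nat -> seq (term L).
Hypothesis disj_PC : PC_witness lg disj.

Lemma disj_metarule n m (G : seq (term L)) (s : nat -> term L) w :
  (0 < n)%N -> (0 < m)%N ->
  entails lg (union (setl G) (setl (map (subst s) (var_seq 0 n)))) (subst s w) ->
  entails lg (union (setl G) (setl (map (subst s) (var_seq n m)))) (subst s w) ->
  entails lg (union (setl G) (setl (map (subst s) (disj n m)))) (subst s w).
Proof.
move=> n_gt0 m_gt0 G_x G_y; have [_ [disj_vars disjP]] := disj_PC n_gt0 m_gt0.
pose phis := map (subst s) (var_seq 0 n); pose psis := map (subst s) (var_seq n m).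
have [phis_n psis_m] : size phis = n /\ size psis = m by rewrite /phis /psis !size_map !size_iota.
have phis_psis : phis ++ psis = map (subst s) (var_seq 0 (n + m)).
  by rewrite -map_cat -var_seq_cat.
have <- : map (inst (phis ++ psis)) (disj n m) = map (subst s) (disj n m).
  by apply: List.map_ext_in => d /disj_vars d_vars; rewrite phis_psis inst_var_seq.
exact: (proj1 (disjP _ _ _ _ phis_n psis_m)).
Qed.

Lemma Fg_disjP (a0 : A) X l1 l2 c : (0 < size l1)%N -> (0 < size l2)%N ->
  Fg lg (union X (setl l1)) c /\ Fg lg (union X (setl l2)) c <->
  Fg lg (union X (setl (map (eval (nth a0 (l1 ++ l2))) (disj (size l1) (size l2))))) c.
Proof.
move=> l1_gt0 l2_gt0; set n := size l1; set m := size l2.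
have [_ [disj_vars disjP]] := disj_PC l1_gt0 l2_gt0.
have nm_l : size (l1 ++ l2) = n + m by rewrite size_cat.
pose x := @var_seq L 0 n; pose y := @var_seq L n m.
have h_x h : map (eval (nth h (l1 ++ l2))) x = l1.
  by rewrite map_nth_var_seq ?nm_l ?drop0 ?take_size_cat //; lia.
have h_y h : map (eval (nth h (l1 ++ l2))) y = l2.
  by rewrite map_nth_var_seq ?nm_l ?drop_size_cat ?take_size //; lia.
split=> [[c_l1 c_l2]|].
  suff : Fg lg (union X (setl (map (eval (nth c (l1 ++ l2))) (disj n m))))
             (eval (nth c (l1 ++ l2)) (Var (n + m))).
    rewrite /= nth_default ?nm_l // (map_eval_nth_default _ a0) //.
    by move=> d /disj_vars; rewrite nm_l.
  apply: (Fg_metarule (n := 2) (P := fun k => if k == 0 then x else y)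
    (t := fun=> Var (n + m))) => [G s G_xy|[|[|//]] _] /=.
  - exact: disj_metarule (G_xy 0 _) (G_xy 1 _).
  - by rewrite h_x /= nth_default ?nm_l.
  - by rewrite h_y /= nth_default ?nm_l.
have [x_n y_m] : size x = n /\ size y = m by rewrite !size_map !size_iota.
have xy_disj d : List.In d (disj n m) ->
    entails lg (union (setl [::]) (setl x)) (inst (x ++ y) d) /\
    entails lg (union (setl [::]) (setl y)) (inst (x ++ y) d).
  move=> d_disj; apply/(disjP [::] x y _ x_n y_m).
  by apply: entails_refl; right; apply: List.in_map.
have eval_disj d : List.In d (disj n m) ->
    eval (nth a0 (l1 ++ l2)) d = eval (nth a0 (l1 ++ l2)) (inst (x ++ y) d).
  by move=> /disj_vars d_vars; rewrite (var_seq_cat 0 n m) inst_var_seq0.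
move=> c_disj; split; apply: (Fg_minimal _ c_disj) => a [Xa|]; try by apply: Fg_sub; left.
- move=> /List.in_map_iff [d [<- /[dup] d_disj /eval_disj ->]].
  apply: (Fg_entails (xy_disj d d_disj).1) => t [[]|t_x].
  by apply: Fg_sub; right; rewrite -{1}(h_x a0); apply: List.in_map.
- move=> /List.in_map_iff [d [<- /[dup] d_disj /eval_disj ->]].
  apply: (Fg_entails (xy_disj d d_disj).2) => t [[]|t_y].
  by apply: Fg_sub; right; rewrite -{1}(h_y a0); apply: List.in_map.
Qed.

Lemma inter_Fg_disj (a0 : A) l1 l2 : (0 < size l1)%N -> (0 < size l2)%N ->
  inter (Fg lg (setl l1)) (Fg lg (setl l2)) =
  Fg lg (setl (map (eval (nth a0 (l1 ++ l2))) (disj (size l1) (size l2)))).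
Proof.
move=> l1_gt0 l2_gt0; apply: predext => c.
by have := Fg_disjP a0 (@emptyset A) c l1_gt0 l2_gt0; rewrite !union0.
Qed.

End Cases.
End Witnesses.

(** * Interpretation of IPC formulas in [Fi^omega(A)] *)

Section Interpretation.
Variable A : algebra L.
Implicit Types (l : seq A).

Lemma Fg_witness_neg neg (a0 : A) l : IL_witness lg neg -> (0 < size l)%N ->
  Fg_witness lg (gens lg (Fg lg (setl l))) (neg (size (gens lg (Fg lg (setl l))))) =
  Fg lg (setl (map (eval (nth a0 l)) (neg (size l)))).
Proof.
move=> IL l_gt0; have [gens_gt0 gens_l] := gens_Fg lg l_gt0.
have [_ [neg_vars _]] := IL _ gens_gt0.
by rewrite (Fg_witness_nth lg a0) //; apply: Fg_neg_congr.
Qed.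

Lemma Fg_witness_imp imp (a0 : A) l1 l2 : DT_witness lg imp ->
  (0 < size l1)%N -> (0 < size l2)%N ->
  Fg_witness lg (gens lg (Fg lg (setl l1)) ++ gens lg (Fg lg (setl l2)))
    (imp (size (gens lg (Fg lg (setl l1)))) (size (gens lg (Fg lg (setl l2))))) =
  Fg lg (setl (map (eval (nth a0 (l1 ++ l2))) (imp (size l1) (size l2)))).
Proof.
move=> DT l1_gt0 l2_gt0; have [gens1_gt0 gens1_l] := gens_Fg lg l1_gt0.
have [gens2_gt0 gens2_l] := gens_Fg lg l2_gt0.
have [_ [imp_vars _]] := DT _ _ gens1_gt0 gens2_gt0.
rewrite (Fg_witness_nth lg a0) ?size_cat; [|lia|by move=> d /imp_vars].
exact: Fg_imp_congr.
Qed.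

Section Generators.
Context (top : term L) (neg : nat -> seq (term L)) (imp disj : nat -> nat -> seq (term L)).
Hypothesis top_theorem : is_theorem lg top.
Variables (g : nat -> A -> Prop) (k : nat) (gam : nat -> nat -> term L) (u : nat -> A).
Hypothesis k_gt0 : (0 < k)%N.
Notation compat := (compatible lg neg imp disj).
Notation tr := (trans top neg imp disj k gam).

Lemma interp_trans phi : compat phi ->
  (forall m, occurs m phi -> g m = Fg lg (setl (map (eval u) (mkseq (gam m) k)))) ->
  interp lg neg imp disj g phi = Fg lg (setl (map (eval u) (tr phi))).
Proof.
elim: phi => [m|a IHa c IHc|a IHa c IHc|a IHa c IHc|a IHa| |] /= cmp g_gam.
- exact: g_gam.
- case/compatible_and: cmp => ca cc.
  rewrite (IHa ca) => [|m m_a]; last exact: g_gam (or_introl m_a).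
  rewrite (IHc cc) => [|m m_c]; last exact: g_gam (or_intror m_c).
  by rewrite Fg_union_cat map_cat.
- case/compatible_or: cmp => ca cc PC.
  have [a_gt0 c_gt0] := (trans_size top gam k_gt0 ca, trans_size top gam k_gt0 cc).
  have [_ [disj_vars _]] := PC _ _ a_gt0 c_gt0.
  rewrite (IHa ca) => [|m m_a]; last exact: g_gam (or_introl m_a).
  rewrite (IHc cc) => [|m m_c]; last exact: g_gam (or_intror m_c).
  rewrite (map_eval_inst (u 0)) => [|d /disj_vars]; last by rewrite size_cat.
  rewrite map_cat -(size_map (eval u) (tr a)) -(size_map (eval u) (tr c)).
  by apply: inter_Fg_disj; rewrite // size_map.
- case/compatible_imp: cmp => ca cc DT.
  have [a_gt0 c_gt0] := (trans_size top gam k_gt0 ca, trans_size top gam k_gt0 cc).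
  have [_ [imp_vars _]] := DT _ _ a_gt0 c_gt0.
  rewrite (IHa ca) => [|m m_a]; last exact: g_gam (or_introl m_a).
  rewrite (IHc cc) => [|m m_c]; last exact: g_gam (or_intror m_c).
  rewrite (map_eval_inst (u 0)) => [|d /imp_vars]; last by rewrite size_cat.
  rewrite map_cat -(size_map (eval u) (tr a)) -(size_map (eval u) (tr c)).
  by apply: Fg_witness_imp; rewrite // size_map.
- case/compatible_neg: cmp => ca IL.
  have a_gt0 := trans_size top gam k_gt0 ca; have [_ [neg_vars _]] := IL _ a_gt0.
  rewrite (IHa ca g_gam) (map_eval_inst (u 0)) // -(size_map (eval u) (tr a)).
  by apply: Fg_witness_neg; rewrite // size_map.
- move/compatible_bot: cmp => IL; have [_ [neg_vars _]] := IL 1 erefl.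
  apply: predext => e; split=> // _.
  have := Fg_neg_full IL e (a0 := u 0) (l := [:: eval u (gam 0 0)]) erefl.
  rewrite (map_eval_inst (u 0)) //=; apply: Fg_mono => x [x_neg|[<-|[]]]; last by left.
  by right.
- apply: predext => x; split; first by apply: Fg_mono => ? [].
  apply: Fg_minimal => _ [<-|[]]; rewrite eval_inst.
  by apply: Fg_theorem; case: top_theorem.
Qed.

End Generators.
End Interpretation.

Section Quasiequation.
Context (top : term L) (neg : nat -> seq (term L)) (imp disj : nat -> nat -> seq (term L)).
Hypothesis top_theorem : is_theorem lg top.
Variables (phis : seq ipc) (y z : nat).
Hypothesis qe_shape : sahlqvist_qe phis y z.
Hypothesis phis_compat : forall phi, List.In phi phis -> compatible lg neg imp disj phi.

Lemma validates_metarules_of_qe_Th :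
  validates_qe lg neg imp disj (formula_alg L) phis y z ->
  validates_metarules lg top neg imp disj phis.
Proof.
move=> qe k k_gt0 G psi gam prem; have [y_z phis_fresh] := qe_shape.
pose FgT := Fg lg (A := formula_alg L).
pose g m := if m == y then FgT (setl G) else if m == z then FgT (setl [:: psi])
  else FgT (setl (mkseq (gam m) k)).
have g_y : g y = FgT (setl G) by rewrite /g eqxx.
have g_z : g z = FgT (setl [:: psi]) by rewrite /g eqxx; case: eqP => // zy; case: y_z.
have g_fin m : fin_gen lg (g m).
  by rewrite /g; case: ifP => _; [exists G | case: ifP => _; eexists].
have g_gam phi : List.In phi phis -> forall m, occurs m phi ->
    g m = FgT (setl (map (@eval L (formula_alg L) (@Var L)) (mkseq (gam m) k))).
  move=> /phis_fresh [_ [y_phi z_phi]] m m_phi; rewrite map_eval_Var /g.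
  have /negbTE -> : m != y by apply/eqP => m_y; apply: y_phi; rewrite -m_y.
  by have /negbTE -> : m != z by apply/eqP => m_z; apply: z_phi; rewrite -m_z.
suff: g y psi by rewrite g_y => /Fg_formula_alg.
have <- : interp lg neg imp disj g (IAnd (IVar y) (IVar z)) = g y.
  apply: qe g_fin _ => phi phi_phis /=.
  apply/(@Fg_union_absorbP _ lg (formula_alg L)) => w; rewrite g_z.
  apply: Fg_minimal => x [<-|[]].
rewrite (interp_trans top_theorem k_gt0 (phis_compat phi_phis) (g_gam _ phi_phis)).
rewrite map_eval_Var g_y Fg_union_cat; apply/Fg_formula_alg.
by apply: entails_mono (prem _ phi_phis) => t [t_G|t_tr]; apply: List.in_or_app; [right | left].
by apply: Fg_sub; right; rewrite g_z; apply: Fg_sub; left.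
Qed.

(* [R(Phi)] uses one [k] for all variables, so generator lists are padded with
   theorem values to a common length. *)
Lemma fin_gen_mkseq (A : algebra L) (g : nat -> A -> Prop) (c : A) bound :
  (forall m, fin_gen lg (g m)) ->
  exists k (h : nat -> A), [/\ (0 < k)%N, h 0 = c & forall m, (m < bound)%N ->
    g m = Fg lg (setl (map (eval h) (mkseq (fun j => Var (m * k + j).+1) k)))].
Proof.
move=> g_fin; pose lf m := sval (constructive_indefinite_description _ (g_fin m)).
have g_lf m : g m = Fg lg (setl (lf m)) by rewrite /lf; case: constructive_indefinite_description.
pose k := (\max_(m < bound) size (lf m)).+1.
pose pad m := lf m ++ nseq (k - size (lf m)) (eval (fun=> c) top).
pose h i := if i is i'.+1 then nth c (pad (i' %/ k)) (i' %% k) else c.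
exists k, h; split=> // m lt_m.
have lf_m : (size (lf m) < k)%N.
  by rewrite ltnS (leq_bigmax (F := fun i : 'I_bound => size (lf i)) (Ordinal lt_m)).
have pad_m : size (pad m) = k by rewrite size_cat size_nseq; lia.
rewrite g_lf -(Fg_cat_theorems _ (k - size (lf m)) (_ : Fg lg _ (eval (fun=> c) top))); last first.
  by apply: Fg_theorem; case: top_theorem.
rewrite -/(pad m) -{1}(mkseq_nth c (pad m)) pad_m /mkseq -map_comp.
congr (Fg lg (setl _)); apply/eq_in_map => j; rewrite mem_iota add0n => /andP [_ lt_j] /=.
by rewrite /h divnMDl // divn_small // addn0 modnMDl modn_small.
Qed.

Lemma validates_qe_of_metarules :
  validates_metarules lg top neg imp disj phis ->
  forall A : algebra L, validates_qe lg neg imp disj A phis y z.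
Proof.
move=> mr A g g_fin qe_prem /=; have [ly g_y] := g_fin y.
rewrite g_y; apply/Fg_union_absorbP => c c_z; rewrite -g_y.
have [k [h [k_gt0 h_c g_h]]] := fin_gen_mkseq c (\max_(p <- phis) var_bound p) g_fin.
pose gam m j := @Var L (m * k + j).+1.
have g_gam phi : List.In phi phis -> forall m, occurs m phi ->
    g m = Fg lg (setl (map (eval h) (mkseq (gam m) k))).
  move=> phi_phis m /occurs_var_bound m_phi; apply: g_h.
  by have := var_bound_In phi_phis; lia.
have gy_filter : deductive_filter lg (g y) by rewrite g_y; apply: Fg_filter.
rewrite -h_c -(Fg_id gy_filter) -Fg_union_nil.
change (Fg lg (union (g y) (setl (map (eval h) [::]))) (eval h (Var 0))).
apply: (Fg_metarule (n := size phis) (P := fun i => trans top neg imp disj k gam (nth ITop phis i))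
  (t := fun=> Var 0)) => [G s G_phis|i lt_i].
  apply: entails_mono (mr k k_gt0 G (subst s (Var 0)) (fun m j => subst s (gam m j)) _).
    by move=> t; left.
  move=> phi phi_phis.
  rewrite (trans_subst (lg := lg) gam s (proj1 top_theorem) k_gt0 (phis_compat phi_phis)).
  by have [i lt_i <-] := In_nth ITop phi_phis; apply: G_phis.
have phi_phis := nth_In ITop lt_i.
have := qe_prem _ phi_phis; rewrite /= (interp_trans top_theorem k_gt0 (phis_compat phi_phis)
  (g_gam _ phi_phis)) => /Fg_union_absorbP /(_ _ c_z).
rewrite h_c; apply: Fg_minimal => x [x_tr|x_y]; last by apply: Fg_sub; left.
by apply: Fg_mono x_tr => w w_tr; right.
Qed.

End Quasiequation.
End Protoalgebraic.

Theorem proposition7p10 (L : lang) (lg : logic L) (top : term L)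
    (neg : nat -> seq (term L)) (imp disj : nat -> nat -> seq (term L))
    (phis : seq ipc) (y z : nat) :
  protoalgebraic lg ->
  is_theorem lg top ->
  sahlqvist_qe phis y z ->
  (forall phi, List.In phi phis -> compatible lg neg imp disj phi) ->
  (validates_metarules lg top neg imp disj phis <->
   validates_qe lg neg imp disj (formula_alg L) phis y z) /\
  (validates_qe lg neg imp disj (formula_alg L) phis y z <->
   (forall A : algebra L, validates_qe lg neg imp disj A phis y z)).
Proof.
move=> [delta [_ [delta_vars [delta_refl delta_mp]]]] top_thm qe_shape phis_compat.
have i_iii := validates_qe_of_metarules delta_vars delta_refl delta_mp top_thm phis_compat.
have ii_i :=
  validates_metarules_of_qe_Th delta_vars delta_refl delta_mp top_thm qe_shape phis_compat.
split; split.
- by move/i_iii; apply.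
- exact: ii_i.
- by move/ii_i/i_iii.
- by apply.
Qed.
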